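(* Let $s,t,q,N$ be integers with $0\le s<q$, $1\le t<q$, $N\ge0$, $t\nmid q$ and $\gcd(t,q)=1$. Write $q=\overline qt+\widehat q$ ($1\le\widehat q<t$), $s=\overline st+\widehat s$ ($0\le\widehat s<t$). Let $S^-(s,t,q,N)=\sum_{k=0}^N\lfloor(s-kt)/q\rfloor$, $M=-\lfloor(s-Nt)/q\rfloor$, $x_M=(s+(M-1)q)/t$ and $S=-\overline q\frac{(M-1)M}2-M(N-\lfloor x_M\rfloor)$. Let $H=\{k\in\mathbb N:(\widehat s+k\widehat q)\bmod t<\widehat q\}$, $J=H\cap\{0,\dots,t-1\}=\{j_0<\dots<j_{\widehat q-1}\}$, and $S_K=\sum_{k\in K}k$. Then: (a) if $j_0\ge M$, $S^-(s,t,q,N)=S$; (b.1) if $j_0<M\le j_{\widehat q-1}$, $S^-(s,t,q,N)=S-S_K$ with $K=H\cap\{0,\dots,M-1\}$; (b.2) if $j_{\widehat q-1}<M$ and $j_0+t\ge M$, $S^-(s,t,q,N)=S-S_J$; (b.3) if $j_{\widehat q-1}<M$ and $j_0+t<M$, with $u=\lfloor(M-1)/t\rfloor$ and $K=H\cap\{ut,\dots,M-1\}$, $S^-(s,t,q,N)=S-uS_J-\widehat q\,t\frac{(u-1)u}2-S_K$.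
   Context: Here $r\bmod t$ denotes the representative of $r$ in $\{0,\dots,t-1\}$. *)

From HB Require Import structures.
From mathcomp Require Import all_boot all_order all_algebra.
Set Implicit Arguments. Unset Strict Implicit. Unset Printing Implicit Defensive.
Import Order.TTheory GRing.Theory Num.Theory.
Local Open Scope ring_scope.

(* For d > 0, (m %/ d)%Z is the floor of m/d and (m %% d)%Z is in [0, d). *)

Definition Sminus (s t q N : int) : int :=
  \sum_(0 <= k < (absz N).+1) ((s - (k%:Z) * t) %/ q)%Z.

Definition Mval (s t q N : int) : int := - ((s - N * t) %/ q)%Z.

Definition qbar (t q : int) : int := (q %/ t)%Z.
Definition qhat (t q : int) : int := (q %% t)%Z.
Definition shat (s t : int) : int := (s %% t)%Z.

Definition floor_xM (s t q M : int) : int := ((s + (M - 1) * q) %/ t)%Z.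

(* S = - qbar (M-1)M/2 - M (N - floor x_M)   ((M-1)M is even) *)
Definition Sval (s t q N : int) : int :=
  let M := Mval s t q N in
  - qbar t q * (((M - 1) * M) %/ 2)%Z - M * (N - floor_xM s t q M).

Definition inH (s t q : int) (k : nat) : bool :=
  ((shat s t + k%:Z * qhat t q) %% t)%Z < qhat t q.

Definition Jseq (s t q : int) : seq nat :=
  [seq j <- iota 0 (absz t) | inH s t q j].

Definition jj (s t q : int) (i : nat) : nat := nth 0%N (Jseq s t q) i.

Definition SJ (s t q : int) : int := \sum_(j <- Jseq s t q) (j%:Z).

Definition SK (s t q : int) (a b : nat) : int :=
  \sum_(a <= k < b | inH s t q k) (k%:Z).

From HB Require Import structures.
From mathcomp Require Import all_boot all_order all_algebra.
From mathcomp Require Import zify ring.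
Import Order.TTheory GRing.Theory Num.Theory.
Local Open Scope ring_scope.

(* Put F(i) = floor((s + i q) / t). Since t < q, M(k) = - floor((s - k t) / q)
   grows by at most one when k increases, and it jumps exactly when
   k = F(M(k)); hence S^-(s,t,q,N) = sum_(i < M) F(i) - M N. The increments
   F(i+1) - F(i) = qbar + [i+1 \in H] turn this, after summation by parts,
   into S^- = S - S_K with K = H \cap [0, M). The four cases then only describe
   H \cap [0, M): H is t-periodic, and as gcd(t, q) = 1 the map k |-> s + k q
   permutes the residues mod t, so each period contains exactly qhat elements
   of H, the first one j_0 and the last one j_(qhat-1). *)

Lemma ltn_modnD_carry (r b d : nat) : (r < d)%N -> (b < d)%N ->
  ((r + b) %% d < b)%N = (d <= r + b)%N.
Proof.
move=> rd bd; have [le_d|lt_d] := leqP d (r + b).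
- by rewrite -(subnK le_d) modnDr modn_small; lia.
- by rewrite modn_small // ltnNge leq_addl.
Qed.

Lemma mul_bin2 (m : nat) : ('C(m, 2) * 2 = m * m.-1)%N.
Proof. by rewrite bin2 muln2 halfK oddM; case: m => //= m; rewrite andNb subn0. Qed.

Lemma count_affine_modn_lt (n a b c : nat) : coprime n b -> (c <= n)%N ->
  count (fun k => (a + k * b) %% n < c)%N (iota 0 n) = c.
Proof.
move=> cop le_cn; pose f k := ((a + k * b) %% n)%N.
have f_inj : {in iota 0 n &, injective f}.
  suff f_mono : forall i j, (j < n)%N -> (i <= j)%N -> f i = f j -> i = j.
    move=> i j; rewrite !mem_iota !add0n => /andP[_ lt_in] /andP[_ lt_jn] fij.
    by have [/f_mono|/ltnW/f_mono] := leqP i j; [apply | move/(_ lt_in (esym fij))].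
  move=> i j lt_jn le_ij /eqP; rewrite eq_sym eqn_modDl eqn_mod_dvd ?leq_mul2r ?le_ij ?orbT //.
  rewrite -mulnBl Gauss_dvdl // /dvdn modn_small; last by lia.
  by rewrite subn_eq0 => le_ji; apply/eqP; rewrite eqn_leq le_ij.
have f_perm : perm_eq (map f (iota 0 n)) (iota 0 n).
  apply: uniq_perm; rewrite ?map_inj_in_uniq ?iota_uniq //.
  apply: (uniq_min_size _ _ _).2; rewrite ?map_inj_in_uniq ?iota_uniq ?size_map //.
  move=> x /mapP[k]; rewrite mem_iota add0n => /andP[_ lt_kn] ->.
  by rewrite mem_iota add0n ltn_pmod //; apply: leq_ltn_trans lt_kn.
rewrite -[LHS](count_map f (fun i => i < c)%N) (permP f_perm).
by rewrite -size_filter (filter_iota_ltn 0) // size_iota.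
Qed.

Section FloorSums.

Variables s t q : nat.
Hypothesis t_gt0 : (0 < t)%N.

(* [floor_x i] is floor(x_(i+1)) in the notation of the statement. *)
Definition floor_x (i : nat) : nat := (s + i * q) %/ t.

Lemma inH_natE (k : nat) : inH s t q k = ((s + k * q) %% t < q %% t)%N.
Proof.
rewrite /inH /shat /qhat !modz_nat ltz_nat.
by rewrite modnDml -modnDmr modnMmr modnDmr.
Qed.

Lemma floor_x_succ (k : nat) :
  floor_x k.+1 = (floor_x k + q %/ t + inH s t q k.+1)%N.
Proof.
rewrite /floor_x inH_natE mulSnr addnA divnD // -[in RHS]modnDm.
by rewrite ltn_modnD_carry ?ltn_pmod.
Qed.

Lemma sum_floor_x (m : nat) :
  (\sum_(0 <= i < m) floor_x i + q %/ t * 'C(m, 2)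
     + \sum_(0 <= i < m | inH s t q i) i = m * floor_x m.-1)%N.
Proof.
elim: m => [|m IH]; first by rewrite !big_geq //= muln0.
rewrite [X in (_ + X)%N]big_mkcond /= !big_nat_recr //= -big_mkcond /=.
rewrite binS bin1 mulnDr.
have step : (m * floor_x m = m * (floor_x m.-1 + q %/ t + inH s t q m))%N.
  by case: m {IH} => // m; rewrite floor_x_succ.
case: (inH s t q m) step; lia.
Qed.

End FloorSums.

Lemma divz_unique (a z d : int) : 0 < d -> z * d <= a < z * d + d -> (a %/ d)%Z = z.
Proof.
move=> d_gt0 /andP[lo hi]; have -> : a = z * d + (a - z * d) by ring.
by rewrite divzMDl ?gt_eqF // divz_small ?addr0 //; apply/andP; split; lia.
Qed.

Lemma divz_bin2 (m : nat) : (((m%:Z - 1) * m%:Z) %/ 2)%Z = 'C(m, 2)%:Z.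
Proof.
have -> : (m%:Z - 1) * m%:Z = ('C(m, 2) * 2)%N.
  by rewrite mul_bin2; case: m => // m; rewrite PoszM mulrC /=; congr (_ * _); lia.
by rewrite PoszM mulzK.
Qed.

Lemma Mval_ge0 (s t q n : nat) : (s < q)%N -> 0 <= Mval s t q n.
Proof. by move=> s_lt_q; rewrite /Mval oppr_ge0 -ltzD1 ltz_divLR; lia. Qed.

Lemma Mval_nat (s t q n : nat) : (s < q)%N -> exists m : nat, Mval s t q n = m.
Proof. by move=> s_lt_q; exists `|Mval s t q n|%N; rewrite abszE ger0_norm // Mval_ge0. Qed.

Section LatticeCount.

Variables s t q : nat.
Hypotheses (s_lt_q : (s < q)%N) (t_gt0 : (0 < t)%N) (t_lt_q : (t < q)%N).

Lemma Mval_succ (n : nat) :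
  Mval s t q n.+1 = Mval s t q n \/
  Mval s t q n.+1 = Mval s t q n + 1 /\ floor_x s t q (absz (Mval s t q n)) = n.
Proof.
have q_gt0 : 0 < q%:Z by lia.
have := Mval_ge0 s t q n s_lt_q; rewrite /Mval.
have -> : s%:Z - n.+1%:Z * t%:Z = (s%:Z - n%:Z * t%:Z) - t%:Z by lia.
set a := s%:Z - n%:Z * t%:Z; set z := (a %/ q)%Z; set z' := ((a - t%:Z) %/ q)%Z => z_le0.
have le_z'z : z' <= z by apply: lez_pdiv2r; lia.
have le_zz' : z - 1 <= z'.
  have -> : z - 1 = (((- 1) * q%:Z + a) %/ q)%Z by rewrite divzMDl ?gt_eqF //; ring.
  by apply: lez_pdiv2r; lia.
have [->|ne_z'z] := eqVneq z' z; [by left | right; have ez' : z' = z - 1 by lia].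
split; first by rewrite ez'; ring.
have za := lez_floor a (lt0r_neq0 q_gt0); have az := ltz_ceil (a - t%:Z) q_gt0.
rewrite -/z -/z' ez' subrK in za az.
apply/eqP; rewrite -eqz_nat /floor_x -divz_nat PoszD PoszM.
rewrite (@divz_unique _ n) // abszE ger0_norm //; rewrite /a in za az; lia.
Qed.

Lemma Sminus_lattice (n : nat) :
  Sminus s t q n =
  \sum_(0 <= i < absz (Mval s t q n)) (floor_x s t q i)%:Z - Mval s t q n * n%:Z.
Proof.
elim: n => [|n IH].
  have -> : Mval s t q 0 = 0 by rewrite /Mval mul0r subr0 divz_small ?oppr0 //; lia.
  by rewrite /Sminus /= big_nat1 mul0r subr0 divz_small ?big_geq ?subr0 //; lia.
have -> : Sminus s t q n.+1 = Sminus s t q n - Mval s t q n.+1.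
  by rewrite /Sminus /= big_nat_recr //= /Mval opprK.
have [m eM] := Mval_nat s t q n s_lt_q.
rewrite IH; case: (Mval_succ n) => [->|[-> F_M]]; rewrite eM.
  by rewrite -[n.+1]addn1 PoszD; ring.
rewrite eM /= in F_M.
by rewrite -PoszD addn1 /= big_nat_recr //= F_M -[n.+1]addn1 !PoszD; ring.
Qed.

Lemma floor_xM_succ (m : nat) : floor_xM s t q m.+1 = floor_x s t q m.
Proof. by rewrite /floor_xM /floor_x -divz_nat PoszD PoszM -addn1 PoszD addrK. Qed.

Lemma Sminus_SK (n : nat) :
  Sminus s t q n = Sval s t q n - SK s t q 0 (absz (Mval s t q n)).
Proof.
have [m eM] := Mval_nat s t q n s_lt_q.
have sum_int := congr1 Posz (@sum_floor_x s t q t_gt0 m).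
rewrite !PoszD !PoszM !(big_morph Posz PoszD (erefl (0 : int))) in sum_int.
rewrite Sminus_lattice /Sval /SK /qbar eM /= divz_bin2 divz_nat.
have -> : m%:Z * (n%:Z - floor_xM s t q m) = m%:Z * n%:Z - m%:Z * floor_x s t q m.-1.
  by case: m {eM sum_int} => [|m]; rewrite ?mul0r ?subr0 // floor_xM_succ mulrBr.
rewrite -sum_int; ring.
Qed.

End LatticeCount.

Lemma sorted_nth0_le (r : seq nat) (x : nat) :
  sorted leq r -> x \in r -> (nth 0 r 0 <= x)%N.
Proof.
move=> r_sorted x_in; rewrite -(nth_index 0 x_in).
have idx_lt : (index x r < size r)%N by rewrite index_mem.
by apply: (sorted_leq_nth leq_trans leqnn) => //; rewrite inE //; apply: leq_ltn_trans idx_lt.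
Qed.

Lemma sorted_le_nth_last (r : seq nat) (x : nat) :
  sorted leq r -> x \in r -> (x <= nth 0 r (size r).-1)%N.
Proof.
move=> r_sorted x_in; rewrite -{1}(nth_index 0 x_in).
have idx_lt : (index x r < size r)%N by rewrite index_mem.
have r_pos : (0 < size r)%N by apply: leq_ltn_trans idx_lt.
apply: (sorted_leq_nth leq_trans leqnn) => //; rewrite ?inE ?ltn_predL //.
by rewrite -ltnS prednK.
Qed.

Section PeriodicSet.

Variables s t q : nat.
Hypotheses (t_gt0 : (0 < t)%N) (coprime_tq : coprime t q).

Lemma inH_addn_mul (k c : nat) : inH s t q (k + c * t) = inH s t q k.
Proof.
rewrite !inH_natE; have -> : (s + (k + c * t) * q = c * q * t + (s + k * q))%N by ring.
by rewrite modnMDl.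
Qed.

Lemma mem_Jseq (k : nat) : (k \in Jseq s t q) = (k < t)%N && inH s t q k.
Proof. by rewrite mem_filter mem_iota andbC. Qed.

Lemma Jseq_sorted : sorted leq (Jseq s t q).
Proof. exact/sorted_filter/iota_sorted/leq_trans. Qed.

Lemma size_Jseq : size (Jseq s t q) = (q %% t)%N.
Proof.
rewrite size_filter (eq_count (a2 := fun k => (s + k * q) %% t < q %% t)%N) /=.
  by rewrite count_affine_modn_lt // ltnW // ltn_pmod.
by move=> k; rewrite inH_natE.
Qed.

Lemma jj0_le_inH (k : nat) : inH s t q k -> (jj s t q 0 <= k)%N.
Proof.
move=> k_in; apply: leq_trans (leq_mod k t).
apply: sorted_nth0_le Jseq_sorted _.
by rewrite mem_Jseq ltn_pmod //= -(inH_addn_mul _ (k %/ t)) addnC -divn_eq.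
Qed.

Lemma SK_cat (a b c : nat) : (a <= b <= c)%N -> SK s t q a c = SK s t q a b + SK s t q b c.
Proof. by move=> /andP[ab bc]; rewrite /SK (big_cat_nat ab bc). Qed.

Lemma SK_eq0 (a b : nat) : (forall k, (a <= k < b)%N -> ~~ inH s t q k) -> SK s t q a b = 0.
Proof. by move=> notH; rewrite /SK big_nat_cond big1 // => k /andP[/notH/negbTE->]. Qed.

Lemma SJ_SK : SJ s t q = SK s t q 0 t.
Proof. by rewrite /SJ /SK big_filter /index_iota subn0. Qed.

Lemma SK_period (c : nat) :
  SK s t q (c * t) (c * t + t) = SJ s t q + (c * t)%:Z * qhat t q.
Proof.
rewrite [(c * t + t)%N]addnC -{1}[(c * t)%N]add0n /SK big_addn addnK.
under eq_bigl do rewrite inH_addn_mul.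
under eq_bigr do rewrite PoszD.
rewrite big_split /= -/(SK s t q 0 t) -SJ_SK; congr (_ + _).
rewrite /index_iota subn0 big_const_seq iter_addr_0 -size_filter size_Jseq.
by rewrite /qhat modz_nat -mulr_natr natz.
Qed.

Lemma SK_periods (u : nat) :
  SK s t q 0 (u * t) = u%:Z * SJ s t q + qhat t q * t%:Z * 'C(u, 2)%:Z.
Proof.
elim: u => [|u IH]; first by rewrite SK_eq0 ?mul0r ?mulr0 ?addr0 // => k; rewrite mul0n ltn0 andbF.
rewrite mulSnr (@SK_cat 0 (u * t)) ?leq_addr // IH SK_period binS bin1.
rewrite -[u.+1]addn1 !PoszD PoszM; ring.
Qed.

Lemma SK_split_periods (u m : nat) : (u * t <= m)%N ->
  SK s t q 0 m = u%:Z * SJ s t q + qhat t q * t%:Z * 'C(u, 2)%:Z + SK s t q (u * t) m.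
Proof. by move=> le_utm; rewrite (@SK_cat 0 (u * t)) ?le_utm // SK_periods. Qed.

Lemma SK_below_jj0 (m : nat) : (m <= jj s t q 0)%N -> SK s t q 0 m = 0.
Proof.
move=> le_m; apply: SK_eq0 => k /andP[_ lt_km]; apply/negP.
by move=> /jj0_le_inH /(leq_trans le_m); rewrite leqNgt lt_km.
Qed.

Lemma SK_eq_SJ (m : nat) :
  (jj s t q (size (Jseq s t q)).-1 < m)%N -> (m <= jj s t q 0 + t)%N -> SK s t q 0 m = SJ s t q.
Proof.
move=> lt_jl_m le_m; rewrite SJ_SK.
have [le_mt|lt_tm] := leqP m t.
  rewrite (@SK_cat 0 m t) ?le_mt // [SK _ _ _ m t]SK_eq0 ?addr0 //.
  move=> k /andP[le_mk lt_kt]; apply/negP => k_in.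
  have : k \in Jseq s t q by rewrite mem_Jseq lt_kt.
  move/(@sorted_le_nth_last _ _ Jseq_sorted)/(leq_trans le_mk).
  by rewrite leqNgt lt_jl_m.
rewrite (@SK_cat 0 t m) ?(ltnW lt_tm) // [SK _ _ _ t m]SK_eq0 ?addr0 //.
move=> k /andP[le_tk lt_km]; apply/negP.
rewrite -(subnK le_tk) -[t in (_ + t)%N]mul1n inH_addn_mul => /jj0_le_inH.
by rewrite leq_subRL // addnC => /(leq_trans le_m); rewrite leqNgt lt_km.
Qed.

End PeriodicSet.

Theorem theorem12 (s t q N : int)
  (hs0 : 0 <= s) (hsq : s < q) (ht1 : 1 <= t) (htq : t < q) (hN : 0 <= N)
  (hndvd : ~~ (t %| q)%Z) (hgcd : gcdz t q = 1) :
  let M := Mval s t q N in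
  let S := Sval s t q N in
  let qh := qhat t q in
  let j0 := jj s t q 0 in
  let jl := jj s t q (absz qh).-1 in
  [/\ (M <= j0%:Z -> Sminus s t q N = S),
      (j0%:Z < M -> M <= jl%:Z ->
         Sminus s t q N = S - SK s t q 0 (absz M)),
      (jl%:Z < M -> M <= j0%:Z + t ->
         Sminus s t q N = S - SJ s t q) &
      (jl%:Z < M -> j0%:Z + t < M ->
         let u := ((M - 1) %/ t)%Z in
         Sminus s t q N =
           S - u * SJ s t q - qh * t * (((u - 1) * u) %/ 2)%Z
             - SK s t q (absz (u * t)) (absz M))].
Proof.
(* [hndvd] only makes J nonempty; the identities hold without it. *)
case: s hs0 hsq => // s _ hsq; case: t ht1 htq hgcd {hndvd} => // t ht1 htq hgcd.
case: q hsq htq hgcd => // q hsq htq hgcd; case: N hN => // n _.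
rewrite !ltz_nat in hsq htq; have t_gt0 : (0 < t)%N by move: ht1; rewrite lez_nat.
have coprime_tq : coprime t q by apply/eqP; move: hgcd => [].
have [m eM] := Mval_nat s t q n hsq.
have key := Sminus_SK s t q hsq t_gt0 htq n.
rewrite eM /= in key; move=> M S qh j0 jl; rewrite {}/M {}/S {}/j0 {}/jl eM.
have -> : `|qh|%N = size (Jseq s t q) by rewrite /qh /qhat modz_nat size_Jseq.
rewrite !lez_nat !ltz_nat; split.
- by move=> le_m; rewrite key SK_below_jj0 ?subr0.
- by move=> _ _; rewrite key.
- by move=> lt_jl_m le_m; rewrite key SK_eq_SJ.
- move=> _ lt_m; have -> : ((m%:Z - 1) %/ t)%Z = (m.-1 %/ t)%N.
    by rewrite -divz_nat; congr (_ %/ _)%Z; lia.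
  have le_um : (m.-1 %/ t * t <= m)%N by apply: leq_trans (leq_trunc_div _ _) (leq_pred _).
  rewrite key -PoszM /= divz_bin2 (SK_split_periods s t q t_gt0 coprime_tq _ _ le_um).
  by rewrite /qh; ring.
Qed.
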